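(* Let $\alpha>2$, $P>0$ and $N\ge 0$. Let $V'$ be a finite set of points (nodes) in the Euclidean plane and let $v$ be a point with $v\notin V'$. Suppose that there are reals $\rho_1,\rho_2$ such that (1) any two distinct nodes of $V'$ are at Euclidean distance at least $\rho_1$ from each other, (2) every node of $V'$ is at distance at least $\rho_2$ from $v$, and (3) $\rho_2 > \rho_1/2 > 0$. Then $$SP(V',v) \;<\; \frac{36(\alpha-1)}{\alpha-2}\,\frac{\rho_2^2}{\rho_1^2}\,\frac{P}{\rho_2^{\alpha}} + N .$$
   Context: Physical (SINR) model in the Euclidean plane: every transmitting node uses the same power $P$, the path-loss exponent is $\alpha>2$, and $N\ge 0$ is the background noise. For a set $V'$ of nodes that transmit simultaneously and a node $v\notin V'$, the sensed power strength at $v$ is $SP(V',v)=\sum_{u\in V'} \frac{P}{d(u,v)^{\alpha}} + N$, where $d(u,v)$ is the Euclidean distance between $u$ and $v$. *)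

From Stdlib Require Import Reals List.
Open Scope R_scope.

Definition point := (R * R)%type.

Definition edist (u v : point) : R :=
  sqrt ((fst u - fst v) ^ 2 + (snd u - snd v) ^ 2).

(* Sensed power strength at v of the (finite, duplicate-free) set Vs of
   simultaneously transmitting nodes, each with power P, path-loss exponent
   alpha (real), background noise N:
     SP(Vs, v) = sum_{u in Vs} P / d(u,v)^alpha + N. *)
Definition sensedPower (P alpha N : R) (Vs : list point) (v : point) : R :=
  fold_right (fun u acc => P / Rpower (edist u v) alpha + acc) 0 Vs + N.

(* Measure distances on the logarithmic scale x_u = ln (d(u,v) / rho2) >= 0, so
   that SP(V',v) - N = P / rho2^alpha * sum_u exp (- alpha x_u).  Tiling the plane
   by square cells of diagonal rho1 centred on v, each cell holds at most one
   node and the central cell none, hence at most 18 t^2 / rho1^2 + 9/2 nodes lie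
   within distance t >= rho2 of v; in logarithmic scale the counting function is
   at most a e^{2x} + 9/2 with a = 18 rho2^2 / rho1^2.  Abel summation against
   this count bounds the sum by a alpha / (alpha - 2) + 9/2, which is below
   36 (alpha - 1) / (alpha - 2) * rho2^2 / rho1^2 because rho2^2 / rho1^2 > 1/4. *)

From Stdlib Require Import Reals List Lra Lia Psatz ZArith Classical.
Open Scope R_scope.

Lemma scaled_exp_gap_le be d : 0 < be -> 0 <= d ->
  be * exp (- be * d) * (1 - exp (-2 * d)) <= 2 * (1 - exp (- be * d)).
Proof.
  intros Hbe Hd.
  pose proof (exp_ineq1_le (be * d)) as Hlin.
  pose proof (exp_ineq1_le (-2 * d)) as Hlin2.
  pose proof (exp_pos (- be * d)) as HE.
  assert (Hinv : exp (- be * d) * exp (be * d) = 1).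
  { rewrite <- exp_plus, <- exp_0. f_equal. ring. }
  assert (Hgap : exp (- be * d) * (be * d) <= 1 - exp (- be * d)) by nra.
  assert (be * exp (- be * d) * (1 - exp (-2 * d)) <= be * exp (- be * d) * (2 * d)).
  { apply Rmult_le_compat_l; nra. }
  nra.
Qed.

Section TailBound.
Variables (al a b : R).
Hypotheses (Hal : 2 < al) (Ha : 0 <= a).

(* The value at [y] of int_y^oo (a e^{2t} + b) al e^{-al t} dt. *)
Definition tail_bound (y : R) : R :=
  a * al / (al - 2) * exp ((2 - al) * y) + b * exp (- al * y).

Lemma tail_bound_step y z : 0 <= y -> y <= z ->
  (a * exp (2 * y) + b) * (exp (- al * y) - exp (- al * z)) <= tail_bound y - tail_bound z.
Proof.
  intros Hy Hyz. set (d := z - y). set (be := al - 2).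
  assert (Hbe : 0 < be) by (unfold be; lra).
  assert (Hd : 0 <= d) by (unfold d; lra).
  set (c := exp ((2 - al) * y)). set (E := exp (- be * d)). set (F := exp (-2 * d)).
  set (q := exp (- al * y)).
  assert (e1 : exp (2 * y) * q = c).
  { unfold q, c. rewrite <- exp_plus. f_equal. ring. }
  assert (e2 : exp (- al * z) = q * E * F).
  { unfold q, E, F. rewrite <- !exp_plus. f_equal. unfold d, be. ring. }
  assert (e3 : exp ((2 - al) * z) = c * E).
  { unfold c, E. rewrite <- exp_plus. f_equal. unfold d, be. ring. }
  unfold tail_bound. rewrite e2, e3. fold q c.
  pose proof (scaled_exp_gap_le be d Hbe Hd) as Hgap. fold E F in Hgap.
  assert (Hc : 0 < c) by apply exp_pos.
  assert (Hfactor : a * al / (al - 2) * (c - c * E) - a * exp (2 * y) * (q - q * E * F)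
                    = c / be * (a * (2 * (1 - E)) - a * (be * E * (1 - F)))).
  { replace (a * exp (2 * y) * (q - q * E * F)) with (a * (c - c * E * F))
      by (rewrite <- e1; ring).
    unfold be. field. lra. }
  assert (0 <= c / be * (a * (2 * (1 - E)) - a * (be * E * (1 - F)))).
  { apply Rmult_le_pos; [apply Rlt_le, Rdiv_lt_0_compat|]; nra. }
  nra.
Qed.

Lemma tail_bound_ge y : (a * exp (2 * y) + b) * exp (- al * y) <= tail_bound y.
Proof.
  unfold tail_bound.
  assert (e1 : exp (2 * y) * exp (- al * y) = exp ((2 - al) * y)).
  { rewrite <- exp_plus. f_equal. ring. }
  pose proof (exp_pos ((2 - al) * y)) as Hc.
  assert (Hratio : 1 <= al / (al - 2)).
  { apply (Rmult_le_reg_r (al - 2)); [lra|]. field_simplify; lra. }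
  assert (a * exp ((2 - al) * y) <= a * (al / (al - 2)) * exp ((2 - al) * y)).
  { rewrite Rmult_assoc. apply Rmult_le_compat_l; nra. }
  unfold Rdiv in *. nra.
Qed.

Lemma tail_bound_decr y z : 0 <= b -> 0 <= y -> y <= z -> tail_bound z <= tail_bound y.
Proof.
  intros Hb Hy Hyz.
  pose proof (tail_bound_step y z Hy Hyz) as Hstep.
  assert (0 <= a * exp (2 * y) + b) by (pose proof (exp_pos (2 * y)); nra).
  assert (exp (- al * z) <= exp (- al * y)).
  { destruct (Req_dec y z) as [<-|Hne]; [lra|]. apply Rlt_le, exp_increasing. nra. }
  nra.
Qed.

End TailBound.

Section LayerCake.
Context {A : Type}.
Variables (x : A -> R) (al a b : R).
Hypotheses (Hal : 2 < al) (Ha : 0 <= a) (Hb : 0 <= b).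

Definition decay_sum (l : list A) : R :=
  fold_right (fun u acc => exp (- al * x u) + acc) 0 l.

Definition count_le (t : R) (l : list A) : nat :=
  length (filter (fun u => if Rle_dec (x u) t then true else false) l).

Lemma decay_sum_app l1 l2 : decay_sum (l1 ++ l2) = decay_sum l1 + decay_sum l2.
Proof. induction l1 as [|u l1 IH]; simpl; [lra|]. unfold decay_sum in *; rewrite IH; lra. Qed.

Lemma decay_sum_remove l1 u l2 :
  decay_sum (l1 ++ u :: l2) = exp (- al * x u) + decay_sum (l1 ++ l2).
Proof. rewrite !decay_sum_app. simpl. lra. Qed.

Lemma count_le_remove t l1 u l2 : (count_le t (l1 ++ l2) <= count_le t (l1 ++ u :: l2))%nat.
Proof.
  unfold count_le. rewrite !filter_app, !length_app. simpl.
  destruct (Rle_dec (x u) t); simpl; lia.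
Qed.

Lemma count_le_all t l : (forall u, In u l -> x u <= t) -> count_le t l = length l.
Proof.
  unfold count_le. induction l as [|u l IH]; intros Hl; simpl; auto.
  destruct (Rle_dec (x u) t) as [_|Hn]; [|exfalso; apply Hn, Hl; left; auto].
  simpl. rewrite IH; auto. intros; apply Hl; right; auto.
Qed.

Lemma exists_argmax (l : list A) : l <> nil ->
  exists l1 m l2, l = l1 ++ m :: l2 /\ forall u, In u l -> x u <= x m.
Proof.
  intros Hl.
  assert (Hmax : exists m, In m l /\ forall u, In u l -> x u <= x m).
  { induction l as [|h t IH]; [congruence|].
    destruct t as [|h2 t2].
    - exists h. split; [left; auto|]. intros u [<-|[]]; lra.
    - destruct IH as [m [Hm Hmax]]; [discriminate|].
      destruct (Rle_dec (x h) (x m)).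
      + exists m. split; [right; auto|]. intros u [<-|Hu]; auto.
      + exists h. split; [left; auto|].
        intros u [<-|Hu]; [lra|]. specialize (Hmax u Hu); lra. }
  destruct Hmax as [m [Hm Hmax]]. destruct (in_split _ _ Hm) as [l1 [l2 ->]].
  exists l1, m, l2. auto.
Qed.

(* Abel summation: the term of a farthest element [m], together with the unit
   jump of the counting function at [x m], is paid for by [tail_bound_step]
   on [x m, T]. *)
Lemma decay_sum_tail_bound_le n : forall l, (length l <= n)%nat ->
  (forall u, In u l -> 0 <= x u) ->
  (forall t, 0 <= t -> INR (count_le t l) <= a * exp (2 * t) + b) ->
  forall T, 0 <= T -> (forall u, In u l -> x u <= T) ->
  decay_sum l + tail_bound al a b T
    <= tail_bound al a b 0 + INR (length l) * exp (- al * T).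
Proof.
  induction n as [|n IH]; intros l Hlen Hpos Hcnt T HT HlT;
    (destruct l as [|h t];
     [simpl; pose proof (tail_bound_decr al a b Hal Ha 0 T Hb (Rle_refl 0) HT); lra|]).
  { simpl in Hlen; lia. }
  destruct (exists_argmax (h :: t)) as [l1 [m [l2 [Heq Hmax]]]]; [discriminate|].
  rewrite Heq in *. clear h t Heq.
  assert (Hlen_rm : length (l1 ++ m :: l2) = S (length (l1 ++ l2)))
    by (rewrite !length_app; simpl; lia).
  assert (Hin_rm : forall u, In u (l1 ++ l2) -> In u (l1 ++ m :: l2)).
  { intros u Hu. apply in_app_or in Hu. apply in_or_app. simpl. tauto. }
  assert (Hm : In m (l1 ++ m :: l2)) by (apply in_or_app; simpl; auto).
  assert (Hm0 : 0 <= x m) by auto.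
  assert (IHrm : decay_sum (l1 ++ l2) + tail_bound al a b (x m)
                 <= tail_bound al a b 0 + INR (length (l1 ++ l2)) * exp (- al * x m)).
  { apply IH; auto; [rewrite Hlen_rm in Hlen; lia|].
    intros t0 Ht0. eapply Rle_trans; [|apply Hcnt; auto]. apply le_INR, count_le_remove. }
  assert (Hcount : INR (length (l1 ++ m :: l2)) <= a * exp (2 * x m) + b).
  { rewrite <- (count_le_all (x m)); auto. }
  rewrite Hlen_rm, S_INR in *. rewrite decay_sum_remove.
  pose proof (tail_bound_step al a b Hal Ha (x m) T Hm0 (HlT m Hm)) as Hstep.
  assert (exp (- al * T) <= exp (- al * x m)).
  { destruct (Req_dec (x m) T) as [->|Hne]; [lra|].
    apply Rlt_le, exp_increasing. assert (x m <= T) by auto. nra. }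
  nra.
Qed.

Lemma decay_sum_le (l : list A) :
  (forall u, In u l -> 0 <= x u) ->
  (forall t, 0 <= t -> INR (count_le t l) <= a * exp (2 * t) + b) ->
  decay_sum l <= a * al / (al - 2) + b.
Proof.
  intros Hpos Hcnt.
  assert (Hb0 : tail_bound al a b 0 = a * al / (al - 2) + b).
  { unfold tail_bound. rewrite !Rmult_0_r, exp_0. ring. }
  destruct l as [|h t].
  { simpl. assert (0 <= a * al / (al - 2)).
    { apply Rmult_le_pos; [nra|]. apply Rlt_le, Rinv_0_lt_compat; lra. }
    lra. }
  destruct (exists_argmax (h :: t)) as [l1 [m [l2 [Heq Hmax]]]]; [discriminate|].
  assert (Hm : In m (h :: t)) by (rewrite Heq; apply in_or_app; simpl; auto).
  pose proof (Hpos m Hm) as Hm0.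
  pose proof (decay_sum_tail_bound_le _ (h :: t) (le_n _) Hpos Hcnt (x m) Hm0 Hmax) as Habel.
  pose proof (Hcnt (x m) Hm0) as Hcount. rewrite count_le_all in Hcount; auto.
  pose proof (tail_bound_ge al a b Hal Ha (x m)).
  pose proof (exp_pos (- al * x m)).
  nra.
Qed.

End LayerCake.

Lemma Int_part_eq_close a b : Int_part a = Int_part b -> -1 < a - b < 1.
Proof.
  intros H. destruct (base_Int_part a) as [a1 a2]. destruct (base_Int_part b) as [b1 b2].
  rewrite H in a1, a2. lra.
Qed.

Lemma Int_part_le_compat a b : a <= b -> (Int_part a <= Int_part b)%Z.
Proof.
  intros H. destruct (base_Int_part a) as [a1 a2]. destruct (base_Int_part b) as [b1 b2].
  assert (IZR (Int_part a) < IZR (Int_part b + 1)) by (rewrite plus_IZR; simpl; lra).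
  apply lt_IZR in H0. lia.
Qed.

Lemma Int_part_half_bounds a c : - c <= a <= c ->
  (- Int_part (c + / 2) <= Int_part (a + / 2) <= Int_part (c + / 2))%Z.
Proof.
  intros [Hl Hr]. split; [|apply Int_part_le_compat; lra].
  destruct (base_Int_part (a + / 2)) as [a1 a2]. destruct (base_Int_part (c + / 2)) as [b1 b2].
  assert (IZR (- Int_part (c + / 2) - 1) < IZR (Int_part (a + / 2))).
  { rewrite minus_IZR, opp_IZR. simpl. lra. }
  apply lt_IZR in H. lia.
Qed.

Definition Zrange (m : nat) : list Z :=
  map (fun k => (Z.of_nat k - Z.of_nat m)%Z) (seq 0 (2 * m + 1)).

Lemma In_Zrange m z : (- Z.of_nat m <= z <= Z.of_nat m)%Z -> In z (Zrange m).
Proof.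
  intros H. unfold Zrange. apply in_map_iff. exists (Z.to_nat (z + Z.of_nat m)).
  split; [rewrite Z2Nat.id; lia|]. apply in_seq. lia.
Qed.

Lemma length_Zrange m : length (Zrange m) = (2 * m + 1)%nat.
Proof. unfold Zrange. rewrite length_map, length_seq. reflexivity. Qed.

Lemma edist_sq u w : edist u w * edist u w = (fst u - fst w) ^ 2 + (snd u - snd w) ^ 2.
Proof. unfold edist. apply sqrt_sqrt. pose proof (pow2_ge_0 (fst u - fst w)). pose proof (pow2_ge_0 (snd u - snd w)). lra. Qed.

Lemma edist_nonneg u w : 0 <= edist u w.
Proof. unfold edist. apply sqrt_pos. Qed.

Lemma odd_square_count_le (n m : nat) (y : R) :
  / 2 < y * y -> INR m <= y + / 2 -> (S n <= (2 * m + 1) * (2 * m + 1))%nat ->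
  INR n <= 9 * (y * y) + 9 / 2.
Proof.
  intros Hy Hm Hn.
  apply le_INR in Hn. rewrite S_INR, !mult_INR, plus_INR, mult_INR in Hn. simpl in Hn.
  destruct m as [|[|m]].
  - simpl in Hn. nra.
  - simpl in Hm, Hn. nra.
  - rewrite !S_INR in *. pose proof (pos_INR m). nra.
Qed.

Section Grid.
Variables (rho1 rho2 : R) (Vs : list point) (v : point).
Hypothesis Hnodup : NoDup Vs.
Hypothesis Hsep : forall u w, In u Vs -> In w Vs -> u <> w -> rho1 <= edist u w.
Hypothesis Hfar : forall u, In u Vs -> rho2 <= edist u v.
Hypotheses (Hrho : rho1 / 2 < rho2) (Hrho1 : 0 < rho1 / 2).

(* Square cells of diagonal [rho1], the cell of index (0,0) centred at [v]. *)
Definition cell_side : R := rho1 / sqrt 2.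

Definition cell_index (a : R) : Z := Int_part (a / cell_side + / 2).

Definition cell (u : point) : Z * Z :=
  (cell_index (fst u - fst v), cell_index (snd u - snd v)).

Lemma cell_side_pos : 0 < cell_side.
Proof. unfold cell_side. apply Rdiv_lt_0_compat; [lra|]. apply sqrt_lt_R0; lra. Qed.

Lemma cell_side_sq : cell_side * cell_side = rho1 * rho1 / 2.
Proof.
  unfold cell_side. pose proof (sqrt_sqrt 2 ltac:(lra)) as H2.
  assert (0 < sqrt 2) by (apply sqrt_lt_R0; lra).
  replace (rho1 / sqrt 2 * (rho1 / sqrt 2)) with (rho1 * rho1 / (sqrt 2 * sqrt 2))
    by (field; lra).
  rewrite H2. reflexivity.
Qed.

Lemma cell_index_eq_close a b : cell_index a = cell_index b ->
  (a - b) * (a - b) < cell_side * cell_side.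
Proof.
  intros H. apply Int_part_eq_close in H. pose proof cell_side_pos as Hs.
  replace (a / cell_side + / 2 - (b / cell_side + / 2)) with ((a - b) / cell_side) in H
    by (field; lra).
  replace (a - b) with ((a - b) / cell_side * cell_side) by (field; lra).
  set (r := (a - b) / cell_side) in *.
  assert (r * r < 1) by nra.
  assert (0 < cell_side * cell_side) by nra.
  replace (r * cell_side * (r * cell_side)) with ((r * r) * (cell_side * cell_side)) by ring.
  nra.
Qed.

Lemma cell_index_zero a : cell_index a = 0%Z -> 4 * (a * a) <= cell_side * cell_side.
Proof.
  unfold cell_index. intros H. pose proof cell_side_pos as Hs.
  destruct (base_Int_part (a / cell_side + / 2)) as [a1 a2]. rewrite H in a1, a2. simpl in *.
  replace a with (a / cell_side * cell_side) by (field; lra).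
  set (r := a / cell_side) in *.
  assert (4 * (r * r) <= 1) by nra.
  replace (r * cell_side * (r * cell_side)) with ((r * r) * (cell_side * cell_side)) by ring.
  assert (0 < cell_side * cell_side) by nra.
  nra.
Qed.

Lemma cell_index_bounds a t : a * a <= t * t -> 0 <= t ->
  (- cell_index t <= cell_index a <= cell_index t)%Z.
Proof.
  intros H Ht. apply Int_part_half_bounds. pose proof cell_side_pos as Hs.
  assert (-t <= a <= t) by nra. assert (0 < / cell_side) by (apply Rinv_0_lt_compat; auto).
  unfold Rdiv. split; nra.
Qed.

Lemma cell_index_nonneg t : 0 <= t -> (0 <= cell_index t)%Z.
Proof.
  intros Ht. assert (Hb : (- cell_index t <= cell_index 0 <= cell_index t)%Z)
    by (apply cell_index_bounds; nra).
  lia.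
Qed.

Lemma cell_inj u w : In u Vs -> In w Vs -> cell u = cell w -> u = w.
Proof.
  intros Hu Hw Hc. unfold cell in Hc. injection Hc as Hx Hy.
  destruct (classic (u = w)) as [E|E]; auto. exfalso.
  pose proof (Hsep u w Hu Hw E) as Hd.
  apply cell_index_eq_close in Hx, Hy.
  replace (fst u - fst v - (fst w - fst v)) with (fst u - fst w) in Hx by ring.
  replace (snd u - snd v - (snd w - snd v)) with (snd u - snd w) in Hy by ring.
  pose proof cell_side_sq. pose proof (edist_sq u w).
  assert (rho1 * rho1 <= edist u w * edist u w) by nra.
  nra.
Qed.

Lemma cell_neq_center u : In u Vs -> cell u <> (0%Z, 0%Z).
Proof.
  intros Hu Hc. unfold cell in Hc. injection Hc as Hx Hy.
  apply cell_index_zero in Hx, Hy.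
  pose proof cell_side_sq. pose proof (edist_sq u v). pose proof (Hfar u Hu).
  assert (rho2 * rho2 <= edist u v * edist u v) by nra.
  simpl in *. nra.
Qed.

(* The cells of the nodes within distance [t] of [v] are distinct, avoid the
   centre, and lie in a square of (2m+1)^2 cells. *)
Lemma count_within_cells t : rho2 <= t ->
  (S (count_le (fun u => edist u v) t Vs)
     <= (2 * Z.to_nat (cell_index t) + 1) * (2 * Z.to_nat (cell_index t) + 1))%nat.
Proof.
  intros Ht. pose proof cell_side_pos.
  set (W := filter (fun u => if Rle_dec (edist u v) t then true else false) Vs).
  assert (HW : forall u, In u W <-> In u Vs /\ edist u v <= t).
  { intros u. unfold W. rewrite filter_In. destruct (Rle_dec (edist u v) t); intuition congruence. }
  set (m := Z.to_nat (cell_index t)).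
  assert (Hm : Z.of_nat m = cell_index t).
  { unfold m. rewrite Z2Nat.id; auto. apply cell_index_nonneg. lra. }
  unfold count_le. fold W. rewrite <- (length_Zrange m), <- length_prod.
  rewrite <- (length_map cell W).
  change (S (length (map cell W))) with (length ((0%Z, 0%Z) :: map cell W)).
  apply NoDup_incl_length.
  - constructor.
    + intros Hin. apply in_map_iff in Hin. destruct Hin as [u [Hu HuW]].
      apply HW in HuW. apply (cell_neq_center u); tauto.
    + apply NoDup_map_NoDup_ForallPairs; [|apply NoDup_filter; auto].
      intros x y Hx Hy. apply HW in Hx, Hy. apply cell_inj; tauto.
  - intros [i j] Hin. apply in_prod_iff.
    destruct Hin as [Hin|Hin].
    + injection Hin as <- <-. split; apply In_Zrange; lia.
    + apply in_map_iff in Hin. destruct Hin as [u [Hu HuW]]. apply HW in HuW.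
      destruct HuW as [HuV Hut]. unfold cell in Hu. injection Hu as <- <-.
      pose proof (edist_sq u v). pose proof (edist_nonneg u v).
      pose proof (pow2_ge_0 (fst u - fst v)). pose proof (pow2_ge_0 (snd u - snd v)).
      assert (edist u v * edist u v <= t * t) by nra.
      split; apply In_Zrange; rewrite Hm; apply cell_index_bounds; simpl in *; nra.
Qed.

Lemma count_within_le t : rho2 <= t ->
  INR (count_le (fun u => edist u v) t Vs) <= 18 * t ^ 2 / rho1 ^ 2 + 9 / 2.
Proof.
  intros Ht.
  pose proof cell_side_pos as Hs. pose proof cell_side_sq as Hss.
  set (s := cell_side) in *. set (y := t / s).
  assert (Hty : t = y * s) by (unfold y; field; lra).
  replace (18 * t ^ 2 / rho1 ^ 2) with (9 * (y * y)).
  2: { rewrite Hty. replace ((y * s) ^ 2) with (y * y * (s * s)) by ring. rewrite Hss. field. lra. }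
  apply (odd_square_count_le _ (Z.to_nat (cell_index t))); [| |apply count_within_cells; auto].
  - assert (Ht2 : rho1 * rho1 < 4 * (t * t)) by nra.
    rewrite Hty in Ht2. replace (y * s * (y * s)) with (y * y * (s * s)) in Ht2 by ring.
    rewrite Hss in Ht2. nra.
  - rewrite INR_IZR_INZ, Z2Nat.id by (apply cell_index_nonneg; lra).
    apply base_Int_part.
Qed.

End Grid.

Lemma ln_le_iff a b : 0 < a -> 0 < b -> (ln a <= ln b <-> a <= b).
Proof.
  intros Ha Hb. split; intros H.
  - destruct (Rle_lt_dec a b) as [|Hlt]; auto. pose proof (ln_increasing b a Hb Hlt). lra.
  - destruct (Rle_lt_dec (ln a) (ln b)) as [|Hlt]; auto. pose proof (ln_lt_inv b a Hb Ha Hlt). lra.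
Qed.

Lemma count_le_log_scale {A} (d : A -> R) (r t : R) (l : list A) :
  0 < r -> (forall u, In u l -> 0 < d u) ->
  count_le (fun u => ln (d u / r)) t l = count_le d (r * exp t) l.
Proof.
  intros Hr Hd. unfold count_le. f_equal. apply filter_ext_in. intros u Hu.
  assert (Hlog : ln (d u / r) <= t <-> d u <= r * exp t).
  { rewrite <- (ln_exp t) at 1. rewrite ln_le_iff by (pose proof (Hd u Hu); pose proof (exp_pos t);
      try apply Rdiv_lt_0_compat; lra).
    split; intros H.
    - apply (Rmult_le_compat_l r) in H; [|lra]. replace (r * (d u / r)) with (d u) in H by (field; lra). exact H.
    - apply (Rmult_le_reg_l r); [lra|]. replace (r * (d u / r)) with (d u) by (field; lra). exact H. }
  destruct (Rle_dec (ln (d u / r)) t), (Rle_dec (d u) (r * exp t)); tauto.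
Qed.

Lemma exp_log_ratio al d r : 0 < d -> 0 < r ->
  exp (- al * ln (d / r)) = Rpower r al / Rpower d al.
Proof.
  intros Hd Hr. unfold Rpower, Rdiv.
  rewrite ln_mult, ln_Rinv by (try apply Rinv_0_lt_compat; lra).
  rewrite <- exp_Ropp, <- exp_plus. f_equal. ring.
Qed.

Lemma sum_path_loss_rescale {A} (d : A -> R) (P al r : R) (l : list A) :
  0 < r -> (forall u, In u l -> 0 < d u) ->
  fold_right (fun u acc => P / Rpower (d u) al + acc) 0 l
    = P / Rpower r al * decay_sum (fun u => ln (d u / r)) al l.
Proof.
  intros Hr Hd. induction l as [|u l IH]; simpl; [ring|].
  unfold decay_sum in *. rewrite IH by (intros; apply Hd; right; auto).
  rewrite exp_log_ratio by (auto; apply Hd; left; auto).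
  unfold Rpower. field. split; apply exp_neq_0.
Qed.

Lemma decay_sum_log_distance_le alpha rho1 rho2 (Vs : list point) v :
  2 < alpha -> NoDup Vs ->
  (forall u w, In u Vs -> In w Vs -> u <> w -> rho1 <= edist u w) ->
  (forall u, In u Vs -> rho2 <= edist u v) ->
  rho1 / 2 < rho2 -> 0 < rho1 / 2 ->
  decay_sum (fun u => ln (edist u v / rho2)) alpha Vs
    <= 18 * (rho2 ^ 2 / rho1 ^ 2) * alpha / (alpha - 2) + 9 / 2.
Proof.
  intros Halpha Hnodup Hsep Hfar Hrho Hrho1.
  assert (Hr : 0 < rho2) by lra.
  assert (Hd : forall u, In u Vs -> 0 < edist u v)
    by (intros u Hu; specialize (Hfar u Hu); lra).
  apply decay_sum_le; [lra| |lra| |].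
  - apply Rmult_le_pos; [lra|]. apply Rlt_le, Rdiv_lt_0_compat; nra.
  - intros u Hu. rewrite <- ln_1. apply ln_le_iff; [lra|apply Rdiv_lt_0_compat; auto|].
    apply (Rmult_le_reg_r rho2); auto.
    replace (edist u v / rho2 * rho2) with (edist u v) by (field; lra).
    specialize (Hfar u Hu). lra.
  - intros t Ht. rewrite count_le_log_scale by auto.
    assert (Hgrow : rho2 <= rho2 * exp t) by (pose proof (exp_ineq1_le t); nra).
    eapply Rle_trans; [apply (count_within_le rho1 rho2); auto|].
    replace (exp (2 * t)) with (exp t * exp t) by (rewrite <- exp_plus; f_equal; ring).
    right. field. lra.
Qed.

Lemma layer_constant_lt alpha q : 2 < alpha -> / 4 < q ->
  18 * q * alpha / (alpha - 2) + 9 / 2 < 36 * (alpha - 1) / (alpha - 2) * q.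
Proof.
  intros Halpha Hq. apply (Rmult_lt_reg_r (alpha - 2)); [lra|].
  field_simplify; [|lra|lra]. nra.
Qed.

Theorem mainTheorem1 (alpha P N rho1 rho2 : R) (Vs : list point) (v : point)
  (Halpha : 2 < alpha) (HP : 0 < P) (HN : 0 <= N)
  (Hnodup : NoDup Vs) (Hv : ~ In v Vs)
  (H1 : forall u w, In u Vs -> In w Vs -> u <> w -> rho1 <= edist u w)
  (H2 : forall u, In u Vs -> rho2 <= edist u v)
  (H3a : rho1 / 2 < rho2) (H3b : 0 < rho1 / 2) :
  sensedPower P alpha N Vs v <
    36 * (alpha - 1) / (alpha - 2) * (rho2 ^ 2 / rho1 ^ 2)
      * (P / Rpower rho2 alpha) + N.
Proof.
  assert (Hd : forall u, In u Vs -> 0 < edist u v) by (intros u Hu; specialize (H2 u Hu); lra).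
  unfold sensedPower. rewrite (sum_path_loss_rescale _ P alpha rho2) by (auto; lra).
  set (K := P / Rpower rho2 alpha). set (q := rho2 ^ 2 / rho1 ^ 2).
  assert (HK : 0 < K) by (unfold K, Rpower; apply Rdiv_lt_0_compat; [lra|apply exp_pos]).
  assert (Hq : / 4 < q).
  { apply (Rmult_lt_reg_r (rho1 ^ 2)); [nra|].
    replace (q * rho1 ^ 2) with (rho2 ^ 2) by (unfold q; field; lra). nra. }
  pose proof (decay_sum_log_distance_le alpha rho1 rho2 Vs v Halpha Hnodup H1 H2 H3a H3b) as Hsum.
  pose proof (layer_constant_lt alpha q Halpha Hq) as Hgap.
  fold q in Hsum. rewrite (Rmult_comm _ K).
  apply Rplus_lt_compat_r, Rmult_lt_compat_l; auto. lra.
Qed.
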